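(* Let $C\ge1$, $k>2$ an integer, $\rho\in(0,1)$ and $M$ a positive integer. Set $\varepsilon_i=\rho/2^{i-1}$ and $C_i=\|p_{\varepsilon_i}\|_1$ for $i=1,\dots,M$; $C_{-1}=1$, $C_0=\frac{2+\rho^k}{2-\rho^k}$, $C_{M+1}=C_*$. Set $\rho_i=\frac{2\beta_i^k}{1+\beta_i^{2k}}$ with $\beta_i=\frac{1-\sqrt{1-\frac{\rho+\varepsilon_i}{1+\varepsilon_i}}}{1+\sqrt{1-\frac{\rho+\varepsilon_i}{1+\varepsilon_i}}}$ for $i=1,\dots,M$; $\rho_{-1}=\rho^k$, $\rho_0=\frac{\rho^k}{2-\rho^k}$, $\rho_{M+1}=\rho_*$. Then $$\tilde\rho(C)\le\max_{i\in\{-1,0,\dots,M\}}\max\Big(\frac{C-C_i}{C_{i+1}-C_i}\rho_{i+1}+\frac{C_{i+1}-C}{C_{i+1}-C_i}\rho_i,\ \rho_*\Big).$$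
   Context: $\mathbb{R}_k[X]$ denotes real polynomials of degree at most $k$, and $\|p\|_1$ is the sum of absolute values of the coefficients of $p$. For $C\ge1$, $\tilde\rho(C)=\min\{\max_{x\in[0,\rho]}|p(x)| : p\in\mathbb{R}_k[X],\ p(1)=1,\ \|p\|_1\le C\}$. $T_k$ is the Chebyshev polynomial of the first kind of degree $k$. For $\varepsilon\ge0$, $p_\varepsilon(X)=T_k\big(2\frac{X+\varepsilon}{\rho+\varepsilon}-1\big)/\big|T_k\big(2\frac{1+\varepsilon}{\rho+\varepsilon}-1\big)\big|$ (the minimizer of $\max_{[-\varepsilon,\rho]}|p|$ over $p\in\mathbb{R}_k[X]$ with $p(1)=1$). $C_*=\|p_0\|_1$, and $\rho_*=\frac{2\beta^k}{1+\beta^{2k}}$ with $\beta=\frac{1-\sqrt{1-\rho}}{1+\sqrt{1-\rho}}$. *)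

From HB Require Import structures.
From mathcomp Require Import all_boot all_order all_algebra.
From mathcomp Require Import all_classical all_reals.
Set Implicit Arguments. Unset Strict Implicit. Unset Printing Implicit Defensive.
Import Order.TTheory GRing.Theory Num.Theory.
Local Open Scope classical_set_scope.
Local Open Scope ring_scope.

Section Defs.
Variable R : realType.

Fixpoint cheb (n : nat) : {poly R} :=
  match n with
  | 0%N => 1
  | 1%N => 'X
  | (m.+1 as n1).+1 => 2%:P * 'X * cheb n1 - cheb m
  end.

Definition norm1 (p : {poly R}) : R := \sum_(i < size p) `|p`_i|.

(* max_{x in [0,rho]} |p(x)| (attained, written as a sup) *)
Definition supnorm (rho : R) (p : {poly R}) : R :=
  sup [set y | exists2 x : R, 0 <= x <= rho & y = `|p.[x]|].

(* rho~(C) = min { max_[0,rho] |p| : deg p <= k, p(1) = 1, ||p||_1 <= C }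
   (the min is attained; written as an inf) *)
Definition rho_tilde (k : nat) (rho C : R) : R :=
  inf [set y | exists p : {poly R},
        [/\ (size p <= k.+1)%N, p.[1] = 1, norm1 p <= C & y = supnorm rho p]].

Definition p_eps (k : nat) (rho eps : R) : {poly R} :=
  `|(cheb k).[2 * (1 + eps) / (rho + eps) - 1]|^-1 *:
    (cheb k \Po ((2 / (rho + eps)) *: 'X + (2 * eps / (rho + eps) - 1)%:P)).

Definition C_star (k : nat) (rho : R) : R := norm1 (p_eps k rho 0).

Definition beta_of (r : R) : R := (1 - Num.sqrt (1 - r)) / (1 + Num.sqrt (1 - r)).

Definition rho_of_beta (k : nat) (b : R) : R := 2 * b ^+ k / (1 + b ^+ (2 * k)).

Definition rho_star (k : nat) (rho : R) : R := rho_of_beta k (beta_of rho).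

Definition eps_i (rho : R) (i : nat) : R := rho / 2 ^+ i.-1.

(* Sequences indexed by j = i + 1, j = 0 .. M+2, corresponding to i = -1 .. M+1 *)
Definition Cseq (k M : nat) (rho : R) (j : nat) : R :=
  if j == 0%N then 1
  else if j == 1%N then (2 + rho ^+ k) / (2 - rho ^+ k)
  else if (j <= M.+1)%N then norm1 (p_eps k rho (eps_i rho j.-1))
  else C_star k rho.

Definition rhoseq (k M : nat) (rho : R) (j : nat) : R :=
  if j == 0%N then rho ^+ k
  else if j == 1%N then rho ^+ k / (2 - rho ^+ k)
  else if (j <= M.+1)%N then
    rho_of_beta k (beta_of ((rho + eps_i rho j.-1) / (1 + eps_i rho j.-1)))
  else rho_star k rho.

Definition interp_term (k M : nat) (rho C : R) (j : nat) : R :=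
  (C - Cseq k M rho j) / (Cseq k M rho j.+1 - Cseq k M rho j) * rhoseq k M rho j.+1
  + (Cseq k M rho j.+1 - C) / (Cseq k M rho j.+1 - Cseq k M rho j) * rhoseq k M rho j.

Definition bound (k M : nat) (rho C : R) : R :=
  \big[Num.max/rho_star k rho]_(j < M.+2)
     Num.max (interp_term k M rho C j) (rho_star k rho).

End Defs.

(* Every node (C_i, rho_i) of the bound is realised by an explicit competitor:
   X^k, (2 X^k - rho^k) / (2 - rho^k), and the shifted Chebyshev polynomials
   p_eps_i and p_0.  For the latter, |T_k| <= 1 on [-1, 1] and
   T_k((b + 1/b) / 2) = (b^k + b^-k) / 2 with b = beta_i show that the maximum
   on [0, rho] is 1 / T_k(...) = rho_i.  A convex combination of two
   competitors has l1-norm and maximum on [0, rho] at most the same convex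
   combination of theirs, so for C_i <= C <= C_(i+1) interpolating between the
   two nodes gives the i-th term of the bound, and for C >= C_* the polynomial
   p_0 itself gives rho_*. *)
From HB Require Import structures.
From mathcomp Require Import all_boot all_order all_algebra.
From mathcomp Require Import all_classical all_reals.
From mathcomp Require Import ring lra zify.
Import Order.TTheory GRing.Theory Num.Theory.
Local Open Scope ring_scope.

Lemma nat_ind2 (P : nat -> Prop) :
  P 0%N -> P 1%N -> (forall n, P n -> P n.+1 -> P n.+2) -> forall n, P n.
Proof.
move=> P0 P1 PSS n; suff [] : P n /\ P n.+1 by [].
by elim: n => [|n [Pn PSn]]; split=> //; apply: PSS.
Qed.

Section Chebyshev.
Context {R : realType}.

Lemma chebSS n : cheb R n.+2 = 2%:P * 'X * cheb R n.+1 - cheb R n.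
Proof. by []. Qed.

Lemma horner_chebSS n (t : R) :
  (cheb R n.+2).[t] = 2 * t * (cheb R n.+1).[t] - (cheb R n).[t].
Proof. by rewrite chebSS !hornerE. Qed.

Lemma size_cheb n : (size (cheb R n) <= n.+1)%N.
Proof.
elim/nat_ind2: n => [||n IH0 IH1]; first by rewrite size_poly1.
  by rewrite /= size_polyX.
rewrite chebSS; apply: leq_trans (size_polyD _ _) _.
rewrite size_polyN geq_max (leq_trans IH0) ?andbT; last exact: leqW.
rewrite -mulrA mul_polyC; apply: leq_trans (size_scale_leq _ _) _.
by apply: leq_trans (size_polyMleq _ _) _; rewrite size_polyX.
Qed.

Lemma horner_cheb_Joukowski n (z : R) : z != 0 ->
  (cheb R n).[(z + z^-1) / 2] = (z ^+ n + z^-1 ^+ n) / 2.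
Proof.
move=> z0; elim/nat_ind2: n => [||n IH0 IH1]; try by rewrite !hornerE; field.
by rewrite horner_chebSS IH0 IH1 !exprS; field.
Qed.

(* [cheb_pair t n] is (T_n(t), U_(n-1)(t)); the second component is only
   there to state the Pell identity T_n^2 - (t^2 - 1) U_(n-1)^2 = 1. *)
Fixpoint cheb_pair (t : R) (n : nat) : R * R :=
  match n with
  | 0%N => (1, 0)
  | m.+1 => (t * (cheb_pair t m).1 + (t ^+ 2 - 1) * (cheb_pair t m).2,
             (cheb_pair t m).1 + t * (cheb_pair t m).2)
  end.

Lemma cheb_pair_Pell (t : R) n :
  (cheb_pair t n).1 ^+ 2 - (t ^+ 2 - 1) * (cheb_pair t n).2 ^+ 2 = 1.
Proof. by elim: n => [|n IH] /=; [ring | rewrite -[RHS]IH; ring]. Qed.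

Lemma cheb_pair1 (t : R) n : (cheb_pair t n).1 = (cheb R n).[t].
Proof.
elim/nat_ind2: n => [||n IH0 IH1]; try by rewrite /= !hornerE; ring.
by rewrite horner_chebSS -IH0 -IH1 /=; ring.
Qed.

Lemma cheb_bounded n (t : R) : -1 <= t <= 1 -> `|(cheb R n).[t]| <= 1.
Proof.
move=> /andP[t_ge t_le]; rewrite -cheb_pair1.
have Pell := cheb_pair_Pell t n.
have U_term_ge0 : 0 <= (1 - t ^+ 2) * (cheb_pair t n).2 ^+ 2.
  by rewrite mulr_ge0 ?sqr_ge0 //; nra.
by rewrite ler_norml; apply/andP; split; nra.
Qed.

End Chebyshev.

Section Norm1.
Context {R : realType}.
Implicit Types (p q : {poly R}) (a c x : R).

Lemma norm1_widen {p n} : (size p <= n)%N -> norm1 p = \sum_(i < n) `|p`_i|.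
Proof.
move=> size_le; rewrite /norm1 (big_ord_widen n (fun i => `|p`_i|) size_le).
rewrite big_mkcond /=; apply: eq_bigr => i _; case: ifP => // /negbT.
by rewrite -leqNgt => size_le_i; rewrite nth_default // normr0.
Qed.

Lemma norm1D p q : norm1 (p + q) <= norm1 p + norm1 q.
Proof.
rewrite (norm1_widen (size_polyD p q)) (norm1_widen (leq_maxl (size p) (size q))).
rewrite (norm1_widen (leq_maxr (size p) _)) -big_split /=.
by apply: ler_sum => i _; rewrite coefD ler_normD.
Qed.

Lemma norm1Z a p : norm1 (a *: p) <= `|a| * norm1 p.
Proof.
rewrite (norm1_widen (size_scale_leq a p)) /norm1 mulr_sumr.
by apply: ler_sum => i _; rewrite coefZ normrM.
Qed.

Lemma norm1N p : norm1 (- p) = norm1 p.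
Proof.
rewrite (norm1_widen (eq_leq (size_polyN p))).
by apply: eq_bigr => i _; rewrite coefN normrN.
Qed.

Lemma norm1C c : norm1 c%:P = `|c|.
Proof. by rewrite (norm1_widen (size_polyC_leq1 c)) big_ord1 coefC. Qed.

Lemma norm1Xn n : norm1 ('X^n : {poly R}) = 1.
Proof.
rewrite /norm1 size_polyXn big_ord_recr /= coefXn eqxx normr1 big1 ?add0r //.
by move=> i _; rewrite coefXn ltn_eqF // normr0.
Qed.

Lemma norm_horner_le_norm1 p x : `|x| <= 1 -> `|p.[x]| <= norm1 p.
Proof.
move=> x_le1; rewrite horner_coef; apply: le_trans (ler_norm_sum _ _ _) _.
apply: ler_sum => i _; rewrite normrM normrX ler_piMr //.
exact: exprn_ile1.
Qed.

End Norm1.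

Section Feasible.
Context {R : realType}.
Variables (k : nat) (rho : R).

Definition feasible (c r : R) (p : {poly R}) :=
  [/\ (size p <= k.+1)%N, p.[1] = 1, norm1 p <= c &
      forall x, 0 <= x <= rho -> `|p.[x]| <= r].

Lemma supnorm_le (p : {poly R}) (r : R) : 0 <= rho ->
  (forall x, 0 <= x <= rho -> `|p.[x]| <= r) -> supnorm rho p <= r.
Proof.
move=> rho_ge0 p_le; apply: ge_sup => [|_ [x x_in ->]]; last exact: p_le.
by exists `|p.[0]|, 0; rewrite ?lexx.
Qed.

Lemma supnorm_ge0 (p : {poly R}) : 0 <= rho <= 1 -> 0 <= supnorm rho p.
Proof.
move=> /andP[rho_ge0 rho_le1].
have bounded : has_ubound [set y | exists2 x : R, 0 <= x <= rho & y = `|p.[x]|].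
  exists (norm1 p) => _ [x /andP[x_ge0 x_le] ->].
  by rewrite norm_horner_le_norm1 // ger0_norm // (le_trans x_le).
apply: le_trans (normr_ge0 p.[0]) (ub_le_sup bounded _).
by exists 0; rewrite ?lexx.
Qed.

Lemma rho_tilde_le_supnorm {c : R} {p : {poly R}} : 0 <= rho <= 1 ->
  (size p <= k.+1)%N -> p.[1] = 1 -> norm1 p <= c ->
  rho_tilde k rho c <= supnorm rho p.
Proof.
move=> rho01 size_p p1 norm_p; apply: ge_inf; last by exists p.
by exists 0 => _ [q [_ _ _ ->]]; apply: supnorm_ge0.
Qed.

Lemma rho_tilde_le_feasible {c r : R} {p : {poly R}} : 0 <= rho <= 1 ->
  feasible c r p -> rho_tilde k rho c <= r.
Proof.
move=> rho01 [size_p p1 norm_p p_le].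
apply: le_trans (rho_tilde_le_supnorm rho01 size_p p1 norm_p) _.
by apply: supnorm_le p_le; case/andP: rho01.
Qed.

Lemma feasible_le {c c' r r' : R} {p : {poly R}} : c <= c' -> r <= r' ->
  feasible c r p -> feasible c' r' p.
Proof.
move=> c_le r_le [size_p p1 norm_p p_le]; split=> // [|x x_in].
  exact: le_trans c_le.
exact: le_trans (p_le x x_in) r_le.
Qed.

Lemma feasible_convex {l c c' r r' : R} {p q : {poly R}} : 0 <= l <= 1 ->
  feasible c r p -> feasible c' r' q ->
  feasible (l * c + (1 - l) * c') (l * r + (1 - l) * r') (l *: p + (1 - l) *: q).
Proof.
move=> /andP[l_ge0 l_le1] [size_p p1 norm_p p_le] [size_q q1 norm_q q_le].
have l'_ge0 : 0 <= 1 - l by rewrite subr_ge0.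
split.
- by rewrite (leq_trans (size_polyD _ _)) // geq_max !(leq_trans (size_scale_leq _ _)).
- by rewrite hornerD !hornerZ p1 q1; ring.
- apply: le_trans (norm1D _ _) _; rewrite lerD //.
    by apply: le_trans (norm1Z _ _) _; rewrite ger0_norm // ler_wpM2l.
  by apply: le_trans (norm1Z _ _) _; rewrite ger0_norm // ler_wpM2l.
- move=> x x_in; rewrite hornerD !hornerZ; apply: le_trans (ler_normD _ _) _.
  rewrite !normrM (ger0_norm l_ge0) (ger0_norm l'_ge0).
  by rewrite lerD // ler_wpM2l // ?p_le ?q_le.
Qed.

Lemma feasible_interp {c c1 c2 r1 r2 : R} {p1 p2 : {poly R}} :
  c1 <= c <= c2 -> c1 < c2 -> feasible c1 r1 p1 -> feasible c2 r2 p2 ->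
  exists p, feasible c ((c - c1) / (c2 - c1) * r2 + (c2 - c) / (c2 - c1) * r1) p.
Proof.
move=> /andP[c1_le c_le2] c12 fp1 fp2.
have c21_gt0 : 0 < c2 - c1 by rewrite subr_gt0.
pose l := (c - c1) / (c2 - c1).
have l01 : 0 <= l <= 1.
  by rewrite divr_ge0 ?subr_ge0 ?ler_pdivrMr //= ?mul1r ?lerD2r // ltW.
have cE : l * c2 + (1 - l) * c1 = c by rewrite /l; field; rewrite gt_eqF.
have l'E : 1 - l = (c2 - c) / (c2 - c1) by rewrite /l; field; rewrite gt_eqF.
exists (l *: p2 + (1 - l) *: p1).
by have := feasible_convex l01 fp2 fp1; rewrite cE l'E.
Qed.

End Feasible.

Section ShiftedChebyshev.
Context {R : realType}.
Variable k : nat.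

Lemma sqrt_one_sub_gt0_lt1 (r : R) : 0 < r < 1 -> 0 < Num.sqrt (1 - r) < 1.
Proof.
move=> /andP[r_gt0 r_lt1]; rewrite sqrtr_gt0 subr_gt0 r_lt1 /=.
have s2 : Num.sqrt (1 - r) ^+ 2 = 1 - r by rewrite sqr_sqrtr // subr_ge0 ltW.
have := sqrtr_ge0 (1 - r); nra.
Qed.

Lemma beta_of_gt0 (r : R) : 0 < r < 1 -> 0 < beta_of r.
Proof.
move=> /sqrt_one_sub_gt0_lt1 /andP[s_gt0 s_lt1].
by rewrite divr_gt0 ?subr_gt0 ?addr_gt0.
Qed.

Lemma beta_of_Joukowski (r : R) : 0 < r < 1 ->
  (beta_of r + (beta_of r)^-1) / 2 = (2 - r) / r.
Proof.
move=> r01; have /andP[r_gt0 r_lt1] := r01.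
have /andP[s_gt0 s_lt1] := sqrt_one_sub_gt0_lt1 _ r01.
have s2 : Num.sqrt (1 - r) ^+ 2 = 1 - r by rewrite sqr_sqrtr // subr_ge0 ltW.
rewrite /beta_of invf_div; move: s_gt0 s_lt1 s2; set s := Num.sqrt _ => s_gt0 s_lt1 s2.
have -> : ((1 - s) / (1 + s) + (1 + s) / (1 - s)) / 2 = (1 + s ^+ 2) / (1 - s ^+ 2).
  by field; do ?[apply/andP; split]; rewrite gt_eqF //; nra.
by rewrite s2; field; rewrite gt_eqF.
Qed.

Lemma rho_of_beta_gt0 (b : R) : 0 < b -> 0 < rho_of_beta k b.
Proof. by move=> b_gt0; rewrite divr_gt0 ?mulr_gt0 ?addr_gt0 ?exprn_gt0. Qed.

Lemma horner_cheb_beta_of (r : R) : 0 < r < 1 ->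
  (cheb R k).[(2 - r) / r] = (rho_of_beta k (beta_of r))^-1.
Proof.
move=> r01; have b_gt0 := beta_of_gt0 _ r01.
rewrite -beta_of_Joukowski // horner_cheb_Joukowski ?gt_eqF //.
move: b_gt0; set b := beta_of r => b_gt0.
have bk_gt0 : 0 < b ^+ k by rewrite exprn_gt0.
rewrite /rho_of_beta exprVn mulnC exprM.
by field; rewrite !gt_eqF ?addr_gt0 ?exprn_gt0.
Qed.

Lemma size_p_eps (rho eps : R) : (size (p_eps k rho eps) <= k.+1)%N.
Proof.
rewrite (leq_trans (size_scale_leq _ _)) // (leq_trans (size_comp_poly_leq _ _)) //.
have size_lin :
    (size ((2 / (rho + eps)) *: 'X + (2 * eps / (rho + eps) - 1)%:P)%R <= 2)%N.
  rewrite (leq_trans (size_polyD _ _)) // geq_max (leq_trans (size_polyC_leq1 _)) //.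
  by rewrite (leq_trans (size_scale_leq _ _)) ?size_polyX.
rewrite ltnS -[leqRHS]muln1 leq_mul //; first by have := @size_cheb R k; lia.
by move: size_lin; case: (size _) => // [|[]].
Qed.

Lemma horner_p_eps (rho eps x : R) : rho + eps != 0 ->
  (p_eps k rho eps).[x] = `|(cheb R k).[2 * (1 + eps) / (rho + eps) - 1]|^-1 *
                          (cheb R k).[2 * (x + eps) / (rho + eps) - 1].
Proof.
move=> rho_eps_neq0; rewrite /p_eps hornerZ horner_comp hornerD hornerZ hornerX hornerC.
by congr (_ * (cheb R k).[_]); field.
Qed.

Lemma feasible_p_eps (rho eps : R) : 0 < rho < 1 -> 0 <= eps ->
  feasible k rho (norm1 (p_eps k rho eps))
    (rho_of_beta k (beta_of ((rho + eps) / (1 + eps)))) (p_eps k rho eps).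
Proof.
move=> /andP[rho_gt0 rho_lt1] eps_ge0.
have rho_eps_gt0 : 0 < rho + eps by rewrite ltr_wpDr.
pose r := (rho + eps) / (1 + eps).
have r01 : 0 < r < 1.
  by rewrite divr_gt0 ?ltr_wpDr // ltr_pdivrMr ?ltr_wpDr // mul1r ltrD2r.
have node : 2 * (1 + eps) / (rho + eps) - 1 = (2 - r) / r.
  by rewrite /r; field; rewrite !gt_eqF ?ltr_wpDr.
have rb_gt0 := rho_of_beta_gt0 _ (beta_of_gt0 _ r01).
have scale :
    `|(cheb R k).[2 * (1 + eps) / (rho + eps) - 1]|^-1 = rho_of_beta k (beta_of r).
  by rewrite node horner_cheb_beta_of // normfV invrK gtr0_norm.
split=> [||//|x /andP[x_ge0 x_le]]; first exact: size_p_eps.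
  rewrite horner_p_eps ?gt_eqF // scale node horner_cheb_beta_of //.
  by rewrite mulfV ?gt_eqF.
rewrite horner_p_eps ?gt_eqF // scale normrM gtr0_norm // ler_piMr ?(ltW rb_gt0) //.
have q_ge0 : 0 <= 2 * (x + eps) / (rho + eps).
  by rewrite divr_ge0 ?mulr_ge0 ?addr_ge0 // ltW.
have q_le2 : 2 * (x + eps) / (rho + eps) <= 2.
  by rewrite ler_pdivrMr // ler_pM2l // lerD2r.
by apply: cheb_bounded; apply/andP; split; lra.
Qed.

End ShiftedChebyshev.

Section Nodes.
Context {R : realType}.
Variables (k M : nat) (rho : R).
Hypothesis rho01 : 0 < rho < 1.

Let rho_ge0 : 0 <= rho. Proof. by case/andP: rho01 => /ltW. Qed.
Let rhok_ge0 : 0 <= rho ^+ k. Proof. exact: exprn_ge0. Qed.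
Let rhok_le1 : rho ^+ k <= 1.
Proof. by case/andP: rho01 => _ /ltW; apply: exprn_ile1. Qed.

Lemma feasible_Xn : feasible k rho 1 (rho ^+ k) 'X^k.
Proof.
split=> [||//|x /andP[x_ge0 x_le]]; rewrite ?size_polyXn ?hornerXn ?expr1n ?norm1Xn //.
by rewrite ger0_norm ?exprn_ge0 // lerXn2r ?nnegrE.
Qed.

Lemma feasible_two_level_Xn :
  feasible k rho ((2 + rho ^+ k) / (2 - rho ^+ k)) (rho ^+ k / (2 - rho ^+ k))
    ((2 - rho ^+ k)^-1 *: (2 *: 'X^k - (rho ^+ k)%:P)).
Proof.
have d_gt0 : 0 < 2 - rho ^+ k by rewrite subr_gt0 (le_lt_trans rhok_le1) ?ltr1n.
have d_inv_ge0 : 0 <= (2 - rho ^+ k)^-1 by rewrite invr_ge0 ltW.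
rewrite ![_ / (2 - rho ^+ k)]mulrC; split.
- rewrite (leq_trans (size_scale_leq _ _)) // (leq_trans (size_polyD _ _)) //.
  rewrite size_polyN geq_max (leq_trans (size_scale_leq _ _)) ?size_polyXn //.
  exact: leq_trans (size_polyC_leq1 _) _.
- by rewrite !hornerE expr1n; field; rewrite gt_eqF.
- apply: le_trans (norm1Z _ _) _; rewrite ger0_norm // ler_wpM2l //.
  apply: le_trans (norm1D _ _) _; rewrite norm1N norm1C ger0_norm // lerD2r.
  by apply: le_trans (norm1Z _ _) _; rewrite norm1Xn ger0_norm ?mulr1.
- move=> x /andP[x_ge0 x_le]; rewrite !hornerE normrM ger0_norm // ler_wpM2l //.
  have xk_le : x ^+ k <= rho ^+ k by rewrite lerXn2r ?nnegrE.
  have xk_ge0 := exprn_ge0 k x_ge0; rewrite ler_norml; apply/andP; split; lra.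
Qed.

Lemma feasible_node j : exists p, feasible k rho (Cseq k M rho j) (rhoseq k M rho j) p.
Proof.
rewrite /Cseq /rhoseq; case: eqP => _; first by exists 'X^k; apply: feasible_Xn.
case: eqP => _; first by eexists; apply: feasible_two_level_Xn.
case: ifP => _; first by eexists; apply: feasible_p_eps; rewrite ?divr_ge0 ?exprn_ge0.
exists (p_eps k rho 0).
by have := feasible_p_eps k rho 0 rho01 (lexx 0); rewrite !addr0 divr1.
Qed.

End Nodes.

Lemma ex_crossing {R : realType} (f : nat -> R) {c : R} {n : nat} :
  f 0%N <= c -> c < f n -> exists2 j, (j < n)%N & f j <= c < f j.+1.
Proof.
move=> f0_le; elim: n => [|n IH]; first by rewrite ltNge f0_le.
case: (ltP c (f n)) => [/IH [j j_lt cross] _ | fn_le c_lt].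
  by exists j; rewrite // ltnW.
by exists n; rewrite ?fn_le.
Qed.

Section Bound.
Context {R : realType}.
Variables (k M : nat) (rho C : R).

Lemma interp_term_le_bound j : (j < M.+2)%N -> interp_term k M rho C j <= bound k M rho C.
Proof.
move=> j_lt; apply: le_trans (le_bigmax _ _ (Ordinal j_lt)).
by rewrite le_max lexx.
Qed.

Lemma rho_star_le_bound : rho_star k rho <= bound k M rho C.
Proof.
apply: le_trans (le_bigmax _ _ (@ord0 M.+1)).
by rewrite le_max lexx orbT.
Qed.

End Bound.

Theorem proposition5 (R : realType) (C : R) (k : nat) (rho : R) (M : nat) :
  1 <= C -> (2 < k)%N -> 0 < rho < 1 -> (0 < M)%N ->
  rho_tilde k rho C <= bound k M rho C.
Proof.
move=> C_ge1 _ rho01 _.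
have rho_in01 : 0 <= rho <= 1 by case/andP: rho01 => /ltW -> /ltW.
have [C_star_le | C_lt] := leP (Cseq k M rho M.+2) C.
  have [p fp] := feasible_node k M _ rho01 M.+2.
  apply: le_trans (rho_star_le_bound k M rho C).
  apply: rho_tilde_le_feasible _ _ rho_in01 (feasible_le _ _ C_star_le _ fp).
  by rewrite /rhoseq ltnn.
have [j j_lt /andP[Cj_le C_lt_Cj1]] := ex_crossing (Cseq k M rho) C_ge1 C_lt.
have [p fp] := feasible_node k M _ rho01 j.
have [q fq] := feasible_node k M _ rho01 j.+1.
have C_in : Cseq k M rho j <= C <= Cseq k M rho j.+1 by rewrite Cj_le ltW.
have [s fs] := feasible_interp _ _ C_in (le_lt_trans Cj_le C_lt_Cj1) fp fq.
apply: le_trans (interp_term_le_bound k M rho C j j_lt).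
exact: rho_tilde_le_feasible _ _ rho_in01 fs.
Qed.
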